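(* Let $K$ be a finite-dimensional Kantor triple system over $\Bbbk\in\{\mathbb{R},\mathbb{C}\}$, $L$ the span of the operators $\langle u,v\rangle$ on $K$, and for $a,b\in K$ let $\tilde K_{ab}:K\oplus L\to K\oplus L$ be $\tilde K_{ab}(z+Z)=-\tfrac16(z\,\langle a,b\rangle(z)\,z)-\tfrac12 Z(\langle a,b\rangle(z))+\tfrac1{12}\langle (z\,\langle a,b\rangle(z)\,z),z\rangle+\tfrac12\langle Z(a),Z(b)\rangle$ ($z\in K$, $Z\in L$). If $a,b,c,d\in K$ satisfy $\langle a,b\rangle=\langle c,d\rangle$ (as operators on $K$), then $\tilde K_{ab}=\tilde K_{cd}$.
   Context: A triple system is a vector space with trilinear product $(xyz)$; $\langle u,v\rangle$ denotes the linear operator $z\mapsto(uzv)-(vzu)$. A Kantor triple system (KTS) satisfies, for all $u,v,x,y,z$: $(uv(xyz))-(xy(uvz))=((uvx)yz)-(x(vuy)z)$ and $\langle\langle u,v\rangle(x),y\rangle=\langle (yxu),v\rangle-\langle (yxv),u\rangle$. *)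

From HB Require Import structures.
From mathcomp Require Import all_boot all_algebra.
From mathcomp Require Import reals Rstruct.
From mathcomp.real_closed Require Import complex.

Set Implicit Arguments.
Unset Strict Implicit.
Unset Printing Implicit Defensive.

Import GRing.Theory.
Local Open Scope ring_scope.

Inductive ground_field := RealField | ComplexField.

Definition scalars (g : ground_field) : fieldType :=
  match g with
  | RealField => Rdefinitions.R
  | ComplexField => complex Rdefinitions.R
  end.

Section KTS.
Variables (F : fieldType) (K : vectType F).
Variable t : K -> K -> K -> K.

Definition trilinear : Prop :=
  (forall y z, linear (fun x => t x y z)) /\
  (forall x z, linear (fun y => t x y z)) /\
  (forall x y, linear (fun z => t x y z)).

Definition br (u v : K) : K -> K := fun z => t u z v - t v z u.

Definition is_KTS : Prop :=
  trilinear /\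
  (forall u v x y z,
      t u v (t x y z) - t x y (t u v z) = t (t u v x) y z - t x (t v u y) z) /\
  (forall u v x y w,
      br (br u v x) y w = br (t y x u) v w - br (t y x v) u w).

Definition inL (Z : K -> K) : Prop :=
  exists s : seq (F * K * K),
    forall w, Z w = \sum_(p <- s) p.1.1 *: br p.1.2 p.2 w.

(* \tilde K_{ab}(z + Z), returned as the pair (K-component, L-component) *)
Definition Ktilde (a b : K) (z : K) (Z : K -> K) : K * (K -> K) :=
  ( - (6%:R^-1) *: t z (br a b z) z - (2%:R^-1) *: Z (br a b z),
    fun w => (12%:R^-1) *: br (t z (br a b z) z) z w
             + (2%:R^-1) *: br (Z a) (Z b) w ).

End KTS.

(* For D in L the two Kantor identities give
     <D x, y> = (y x D(.)) + D (x y .),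
     <a,b> (D w) = (b (D a) w) - (a (D b) w),
     D (<a,b> w) = ((D a) b w) - ((D b) a w),
   first for D = <u,v> and then, by linearity, for all of L.  Expanding
   <Z a, Z b> - <Z b, Z a> with these identities for Z in L gives
   -2 Z<a,b>Z, and since <.,.> is antisymmetric, <Z a, Z b> = -Z<a,b>Z.
   So every term of K~_ab depends on (a, b) only through <a,b>. *)

From HB Require Import structures.
From mathcomp Require Import all_boot all_algebra.
From mathcomp Require Import reals Rstruct.
From mathcomp.real_closed Require Import complex.
From mathcomp Require Import ring.
From Stdlib Require Import FunctionalExtensionality.
Local Open Scope ring_scope.
Import GRing.Theory Num.Theory.

Definition linear_of {F : fieldType} {K : vectType F} {f : K -> K}
  (hf : linear f) : {linear K -> K} :=
  HB.pack f (GRing.isLinear.Build _ _ _ _ f hf).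

(* [linear_combination] proves an identity between formal combinations of
   vectors from the equations among its premises (each taken with
   coefficient 1): after summing them, the goal minus their sum is checked
   coordinatewise in a basis, where [ring] applies. *)
Lemma eq_of_diff {V : zmodType} {l r x y : V} : l = r -> x - y = l - r -> x = y.
Proof. by move=> -> /eqP; rewrite subrr subr_eq0 => /eqP. Qed.

Ltac add_premises :=
  repeat match goal with
  | |- _ = _ -> _ = _ -> _ =>
    let e := fresh "e" in let e' := fresh "e" in
    move=> e e'; move: (congr2 +%R e e'); clear e e'
  end.

Ltac coord_ring :=
  apply: (can_inj (passmx.rVofK (vbasisP fullv))); apply/rowP => i;
  rewrite !(linearD, linearN, linearZ, linear0, mxE); ring.

Ltac linear_combination :=
  add_premises;
  first [let e := fresh "e" in move=> e; apply: (eq_of_diff e); coord_ring | coord_ring].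

Section KantorTripleSystem.
Context {F : fieldType} {K : vectType F} {t : K -> K -> K -> K}.
Hypothesis hK : is_KTS t.

Lemma tD1 x x' y z : t (x + x') y z = t x y z + t x' y z.
Proof. exact: (linearD (linear_of (hK.1.1 y z))). Qed.
Lemma tD2 x y y' z : t x (y + y') z = t x y z + t x y' z.
Proof. exact: (linearD (linear_of (hK.1.2.1 x z))). Qed.
Lemma tD3 x y z z' : t x y (z + z') = t x y z + t x y z'.
Proof. exact: (linearD (linear_of (hK.1.2.2 x y))). Qed.
Lemma tN1 x y z : t (- x) y z = - t x y z.
Proof. exact: (linearN (linear_of (hK.1.1 y z))). Qed.
Lemma tN2 x y z : t x (- y) z = - t x y z.
Proof. exact: (linearN (linear_of (hK.1.2.1 x z))). Qed.
Lemma tN3 x y z : t x y (- z) = - t x y z.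
Proof. exact: (linearN (linear_of (hK.1.2.2 x y))). Qed.
Lemma tZ1 a x y z : t (a *: x) y z = a *: t x y z.
Proof. exact: (linearZ_LR (linear_of (hK.1.1 y z))). Qed.
Lemma tZ2 a x y z : t x (a *: y) z = a *: t x y z.
Proof. exact: (linearZ_LR (linear_of (hK.1.2.1 x z))). Qed.
Lemma tZ3 a x y z : t x y (a *: z) = a *: t x y z.
Proof. exact: (linearZ_LR (linear_of (hK.1.2.2 x y))). Qed.
Lemma t01 y z : t 0 y z = 0.
Proof. exact: (linear0 (linear_of (hK.1.1 y z))). Qed.
Lemma t02 x z : t x 0 z = 0.
Proof. exact: (linear0 (linear_of (hK.1.2.1 x z))). Qed.
Lemma t03 x y : t x y 0 = 0.
Proof. exact: (linear0 (linear_of (hK.1.2.2 x y))). Qed.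

Ltac expand := rewrite ?/br ?(tD1, tD2, tD3, tN1, tN2, tN3, tZ1, tZ2, tZ3, t01, t02, t03).

Let kts1 := hK.2.1.
Let kts2 := hK.2.2.

Lemma br_brl u v x y z :
  br t (br t u v x) y z = t y x (br t u v z) + br t u v (t x y z).
Proof.
move: (kts2 u v x y z) (esym (kts1 y x u z v)) (kts1 y x v z u).
expand; linear_combination.
Qed.

Lemma br_br_inner u v a b w :
  br t a b (br t u v w) = t b (br t u v a) w - t a (br t u v b) w.
Proof.
move: (esym (kts2 a b u w v)) (kts2 a b v w u) (esym (kts1 a u b v w)) (kts1 a v b u w)
  (kts1 b u a v w) (esym (kts1 b v a u w)) (kts1 w u a v b) (esym (kts1 w u b v a))
  (esym (kts1 w v a u b)) (kts1 w v b u a).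
expand; linear_combination.
Qed.

Lemma br_br_outer u v a b w :
  br t u v (br t a b w) = t (br t u v a) b w - t (br t u v b) a w.
Proof.
move: (esym (kts2 u v a w b)) (kts2 u v b w a) (kts1 w a u b v) (esym (kts1 w a v b u))
  (esym (kts1 w b u a v)) (kts1 w b v a u).
expand; linear_combination.
Qed.

Lemma inL_ind (P : (K -> K) -> Prop) :
  P (fun _ => 0) ->
  (forall l u v D, P D -> P (fun w => l *: br t u v w + D w)) ->
  forall Z, inL t Z -> P Z.
Proof.
move=> P0 PS Z [s /functional_extensionality ->].
elim: s => [|[[l u] v] s IH]; set S := (X in P X).
  suff -> : S = fun _ => 0 by [].
  by apply: functional_extensionality => w; rewrite /S big_nil.
suff -> : S = fun w => l *: br t u v w + \sum_(p <- s) p.1.1 *: br t p.1.2 p.2 w.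
  exact: PS.
by apply: functional_extensionality => w; rewrite /S big_cons.
Qed.

Lemma br_inLl {Z} (hZ : inL t Z) x y z :
  br t (Z x) y z = t y x (Z z) + Z (t x y z).
Proof.
move: Z hZ x y z; apply: inL_ind => [|l u v D IH] x y z /=.
  by expand; linear_combination.
move: (congr1 ( *:%R l) (br_brl u v x y z)) (IH x y z).
expand; linear_combination.
Qed.

Lemma br_inL {Z} (hZ : inL t Z) a b w :
  br t a b (Z w) = t b (Z a) w - t a (Z b) w.
Proof.
move: Z hZ a b w; apply: inL_ind => [|l u v D IH] a b w /=.
  by expand; linear_combination.
move: (congr1 ( *:%R l) (br_br_inner u v a b w)) (IH a b w).
expand; linear_combination.
Qed.

Lemma inL_br {Z} (hZ : inL t Z) a b w :
  Z (br t a b w) = t (Z a) b w - t (Z b) a w.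
Proof.
move: Z hZ a b w; apply: inL_ind => [|l u v D IH] a b w /=.
  by expand; linear_combination.
move: (congr1 ( *:%R l) (br_br_outer u v a b w)) (IH a b w).
expand; linear_combination.
Qed.

Lemma inL_sub {Z} (hZ : inL t Z) x y : Z (x - y) = Z x - Z y.
Proof.
move: Z hZ x y; apply: inL_ind => [|l u v D IH] x y /=.
  by rewrite subrr.
move: (IH x y); expand; linear_combination.
Qed.

Lemma br_inL_images {Z} (hZ : inL t Z) (two_neq0 : 2%:R != 0 :> F) a b w :
  br t (Z a) (Z b) w = - Z (br t a b (Z w)).
Proof.
apply: (scalerI two_neq0); rewrite !scaler_nat !mulr2n.
rewrite {1}(_ : br t (Z a) (Z b) w = - br t (Z b) (Z a) w); last by rewrite /br opprB.
rewrite !(br_inLl hZ) {1}(inL_br hZ) (br_inL hZ) (inL_sub hZ).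
linear_combination.
Qed.

End KantorTripleSystem.

Lemma scalars_two_neq0 g : 2%:R != 0 :> scalars g.
Proof. by case: g; rewrite /= pnatr_eq0. Qed.

Theorem mainTheorem9 (g : ground_field) (K : vectType (scalars g))
    (t : K -> K -> K -> K) (hK : is_KTS t) (a b c d : K) :
  br t a b =1 br t c d ->
  forall (z : K) (Z : K -> K), inL t Z ->
    Ktilde t a b z Z = Ktilde t c d z Z.
Proof.
move=> eq_ab z Z hZ; rewrite /Ktilde eq_ab; congr pair.
apply: functional_extensionality => w.
by rewrite !(br_inL_images hK hZ (scalars_two_neq0 g)) eq_ab.
Qed.
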